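(* In the setting of the context, let $d$ be a positive integer and $J$ a nonempty subset of $\{0,\dots,m\}$. Suppose that $M=M_J(d)$ is bicyclic. Then $M=K_i(d)K_j(d)$ for any $i,j\in J$ such that the degree of $K_i(d)K_j(d)$ over $k$ is maximal (among pairs in $J$).
   Context: $k$ is a global field, all extensions lie in a separable closure. $p$ is a prime, $m\ge2$, $K_0,\dots,K_m$ are cyclic extensions of $k$ with $[K_i:k]=p^{\epsilon_i}$, $\epsilon_0\le\epsilon_i$ for all $i$, $\bigcap_{i=0}^mK_i=k$, and $K_j\not\subseteq K_i$ for $i\ne j$. For $0\le f\le\epsilon_i$, $K_i(f)$ is the unique subfield of $K_i$ of degree $p^f$ over $k$ (so the statement tacitly concerns $d$ for which these subfields are defined). For nonempty $J$, $M_J(d)$ is the compositum of the $K_i(d)$, $i\in J$. A finite Galois extension $F/k$ is bicyclic if $\mathrm{Gal}(F/k)\simeq\mathbb{Z}/n_1\times\mathbb{Z}/n_2$ with $n_1,n_2>1$ and $n_2\mid n_1$. *)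

From HB Require Import structures.
From mathcomp Require Import all_boot all_order all_algebra all_fingroup all_solvable all_field.
Set Implicit Arguments. Unset Strict Implicit. Unset Printing Implicit Defensive.
Import GRing.Theory.
Local Open Scope ring_scope.

(* x lies in the prime subfield of k (elements a/b with a,b integers, b != 0). *)
Definition prime_elt (k : fieldType) (x : k) : Prop :=
  exists a b : int, b%:~R != 0 :> k /\ x = a%:~R / b%:~R.

Definition prime_poly (k : fieldType) (P : {poly k}) : Prop :=
  forall i, prime_elt P`_i.

Definition fin_dim_over (k : fieldType) (S : k -> Prop) : Prop :=
  exists (n : nat) (b : 'I_n -> k),
    forall x : k, exists c : 'I_n -> k,
      (forall i, S (c i)) /\ x = \sum_(i < n) c i * b i.

Definition transc_over_prime (k : fieldType) (t : k) : Prop :=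
  forall P : {poly k}, prime_poly P -> P.[t] = 0 -> P = 0.

Definition in_prime_rat_fun (k : fieldType) (t x : k) : Prop :=
  exists P Q : {poly k}, [/\ prime_poly P, prime_poly Q, Q.[t] != 0 &
                           x = P.[t] / Q.[t]].

Definition number_field (k : fieldType) : Prop :=
  [pchar k] =i pred0 /\ fin_dim_over (@prime_elt k).

Definition global_function_field (k : fieldType) : Prop :=
  (exists p, p \in [pchar k]) /\
  exists t : k, transc_over_prime t /\ fin_dim_over (in_prime_rat_fun t).

Definition global_field (k : fieldType) : Prop :=
  number_field k \/ global_function_field k.

(* The base field k is represented by 1%AS inside L. *)

Definition cyclic_ext (k : fieldType) (L : splittingFieldType k) (K : {subfield L}) : bool :=
  galois 1%AS K && cyclic 'Gal(K / 1%AS).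

Definition compositum (k : fieldType) (L : splittingFieldType k) (I : finType)
    (J : {set I}) (E : I -> {subfield L}) : {aspace L} :=
  <<(\sum_(i in J) (E i : {vspace L}))%VS>>%AS.

Definition compositum2 (k : fieldType) (L : splittingFieldType k)
    (E F : {subfield L}) : {aspace L} :=
  <<((E : {vspace L}) + F)%VS>>%AS.

Definition bicyclic (k : fieldType) (L : splittingFieldType k) (F : {vspace L}) : Prop :=
  galois 1%AS F /\
  exists n1 n2 : nat, [/\ 1 < n1, 1 < n2, n2 %| n1 &
     'Gal(F / 1%AS) \isog [set: ('Z_n1 * 'Z_n2)%type]]%N.

From HB Require Import structures.
From mathcomp Require Import all_boot all_order all_algebra all_fingroup all_solvable all_field.
Set Implicit Arguments. Unset Strict Implicit. Unset Printing Implicit Defensive.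

(* Let M = M_J(d) and G = Gal(M/k), which is isomorphic to Z/n1 x Z/n2, hence
   abelian of rank at most 2.  The subgroups H_l = Gal(M/K_l(d)), l in J, meet
   trivially and each G/H_l is cyclic of order p^d; so G has exponent dividing
   p^d and no H_l contains Omega_1(G), a group of order at most p^2.  Hence
   A = H_l0 :&: Omega_1(G) has order 1 or p, some H_l1 meets A trivially, and
   then H_l0 :&: H_l1 = 1, i.e. M = K_l0(d) K_l1(d).  A pair of maximal degree
   therefore also gives M. *)

Section GroupTheory.
Local Open Scope group_scope.
Variable gT : finGroupType.
Implicit Types G H : {group gT}.

Lemma exponent_dvd_quotients (I : finType) (J : {set I}) G (H : I -> {group gT}) n :
    (forall l, l \in J -> H l <| G) -> \bigcap_(l in J) H l = 1 ->
    (forall l, l \in J -> exponent (G / H l) %| n) -> exponent G %| n.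
Proof.
move=> nsHG capH expQ; apply/exponentP => x Gx.
suff: x ^+ n \in \bigcap_(l in J) H l by rewrite capH => /set1P.
apply/bigcapP => l lJ.
have nHx : x \in 'N(H l) by apply: subsetP (normal_norm (nsHG l lJ)) x Gx.
apply: coset_idr; first by rewrite groupX.
by rewrite morphX //=; apply: (exponentP (expQ l lJ)); rewrite mem_quotient.
Qed.

(* If x H generates G / H, of order n, and q is a prime divisor of n, then
   x ^+ (n %/ q) lies outside H and has order q. *)
Lemma cyclic_quotient_Ohm1_not_sub G H :
    H <| G -> cyclic (G / H) -> 1 < #|G / H| -> exponent G %| #|G / H| ->
  ~~ ('Ohm_1(G) \subset H).
Proof.
move=> nsHG /cyclicP[c defQ] ntQ expG; set n := #|G / H| in ntQ expG.
have /morphimP[x Nx Gx def_c] : c \in G / H by rewrite defQ cycle_id.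
have oc : #[c] = n by rewrite orderE -defQ.
have q_pr : prime (pdiv n) by apply: pdiv_prime.
set y := x ^+ (n %/ pdiv n).
have yH : y \notin H.
  apply/negP => Hy; have := ltn_Pdiv (prime_gt1 q_pr) (ltnW ntQ).
  rewrite ltnNge => /negP; apply; apply: dvdn_leq.
    by rewrite divn_gt0 ?pdiv_gt0 ?pdiv_leq // ltnW.
  by rewrite -{1}oc order_dvdn def_c -morphX //= coset_id.
have oy : #[y] = pdiv n.
  have : #[y] %| pdiv n.
    by rewrite order_dvdn -expgM divnK ?pdiv_dvd // (exponentP expG) ?groupX.
  case/primeP: q_pr => _ /[apply] /orP[/eqP|/eqP //].
  by move/eqP; rewrite order_eq1 => /eqP y1; rewrite y1 group1 in yH.
apply: contra yH => /subsetP; apply.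
by rewrite Ohm1Eprime mem_gen // inE groupX // oy.
Qed.

Section AbelianRankTwo.
Variables (p : nat) (G : {group gT}).
Hypotheses (p_pr : prime p) (pG : p.-group G) (cGG : abelian G) (rG : 'r(G) <= 2).

Lemma Ohm1_proper_prime (A : {group gT}) :
  A \proper 'Ohm_1(G) -> A :!=: 1 -> prime #|A|.
Proof.
move=> ltAW ntA; have pW := pgroupS (Ohm_sub 1 G) pG.
have pA := pgroupS (proper_sub ltAW) pW.
have := proper_card ltAW; rewrite [#|A|](card_pgroup pA) (card_pgroup pW).
rewrite ltn_exp2l ?prime_gt1 // -(rank_abelian_pgroup pG cGG) => ltAr.
have logA : logn p #|A| = 1%N.
  apply/eqP; rewrite eqn_leq -ltnS (leq_trans ltAr rG) lt0n /=.
  by apply: contra ntA => /eqP logA0; rewrite trivg_card1 (card_pgroup pA) logA0.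
by rewrite logA expn1.
Qed.

Lemma abelian_rank2_TI_pair (I : finType) (J : {set I}) (H : I -> {group gT}) :
    J != set0 -> (forall l, l \in J -> H l \subset G) ->
    (forall l, l \in J -> ~~ ('Ohm_1(G) \subset H l)) ->
    \bigcap_(l in J) H l = 1 ->
  exists i j, [/\ i \in J, j \in J & H i :&: H j = 1].
Proof.
move=> /set0Pn[l0 l0J] sHG nWH capH; set A := (H l0 :&: 'Ohm_1(G))%G.
have [l1 l1J tiAH] : exists2 l1, l1 \in J & A :&: H l1 = 1.
  have [A1 | ntA] := eqVneq (A : {set gT}) 1.
    by exists l0; rewrite // (setIidPl (subsetIl _ _)).
  have ltAW : A \proper 'Ohm_1(G).
    rewrite properEneq subsetIr andbT; apply: contraNneq (nWH l0 l0J) => <-.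
    exact: subsetIl.
  have [l1 l1J nAH] : exists2 l1, l1 \in J & ~~ (A \subset H l1).
    apply/exists_inP; apply: contraNT ntA => /exists_inPn sAH.
    apply/eqP/trivgP; rewrite -capH; apply/bigcapsP => l lJ.
    by have := sAH l lJ; rewrite negbK.
  by exists l1; rewrite // prime_TIg ?Ohm1_proper_prime.
exists l0, l1; split=> //; have /TI_Ohm1 : (H l0 :&: H l1)%G :&: 'Ohm_1(G) = 1.
  by rewrite /= setIAC.
by rewrite (setIidPl _) // subIset ?sHG.
Qed.

End AbelianRankTwo.

Lemma cyclic_quotients_TI_pair p d G (I : finType) (J : {set I})
    (H : I -> {group gT}) :
    prime p -> 0 < d -> abelian G -> 'r(G) <= 2 -> J != set0 ->
    (forall l, l \in J ->
       [/\ H l <| G, cyclic (G / H l) & #|G / H l| = (p ^ d)%N]) ->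
    \bigcap_(l in J) H l = 1 ->
  exists i j, [/\ i \in J, j \in J & H i :&: H j = 1].
Proof.
move=> p_pr d_gt0 cGG rG nJ quoH capH.
have expG : exponent G %| (p ^ d)%N.
  apply: (exponent_dvd_quotients _ capH) => [l /quoH[] // | l /quoH[_ _ <-]].
  exact: exponent_dvdn.
have pG : p.-group G by rewrite -pnat_exponent (pnat_dvd expG) ?pnatX ?pnat_id.
apply: (abelian_rank2_TI_pair p_pr pG cGG rG nJ _ _ capH).
  by move=> l /quoH[/normal_sub].
move=> l /quoH[nsHG cycQ oQ]; apply: cyclic_quotient_Ohm1_not_sub; rewrite ?oQ //.
by rewrite -(expn0 p) ltn_exp2l ?prime_gt1.
Qed.

End GroupTheory.

Section ZpProduct.
Local Open Scope group_scope.
Variables n1 n2 : nat.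

Lemma abelian_Zp_prod : abelian [set: 'Z_n1 * 'Z_n2].
Proof. by apply/centsP => -[x1 x2] _ [y1 y2] _; congr (_, _); apply: Zp_mulgC. Qed.

Lemma rank_Zp_prod : 'r([set: 'Z_n1 * 'Z_n2]) <= 2.
Proof.
set e1 : 'Z_n1 * 'Z_n2 := (Zp1, 1); set e2 : 'Z_n1 * 'Z_n2 := (1, Zp1).
have genT : <<[set e1; e2]>> = [set: 'Z_n1 * 'Z_n2].
  apply/eqP; rewrite eqEsubset subsetT; apply/subsetP => -[x1 x2] _.
  have expX (x : 'Z_n1 * 'Z_n2) n : x ^+ n = (x.1 ^+ n, x.2 ^+ n).
    by elim: n => // n IH; rewrite !expgS IH.
  have -> : (x1, x2) = e1 ^+ x1 * e2 ^+ x2.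
    rewrite !expX /= !Zp1_expgz !expg1n; apply/eqP.
    by rewrite xpair_eqE /= mulg1 mul1g !eqxx.
  by rewrite groupM ?groupX ?mem_gen // !inE eqxx ?orbT.
rewrite -grank_abelian ?abelian_Zp_prod //= -genT.
by apply: leq_trans (grank_min _) _; rewrite cards2 ltnS leq_b1.
Qed.

End ZpProduct.

Section Compositum.
Variables (k : fieldType) (L : splittingFieldType k).
Implicit Types E F M : {subfield L}.

Lemma compositum_sup (I : finType) (J : {set I}) (E : I -> {subfield L}) l :
  l \in J -> (E l <= compositum J E)%VS.
Proof. by move=> lJ; apply: subv_trans (sub_agenv _); apply: sumv_sup lJ _. Qed.

Lemma compositum_sub (I : finType) (J : {set I}) (E : I -> {subfield L}) M :
  (forall l, l \in J -> E l <= M)%VS -> (compositum J E <= M)%VS.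
Proof. by move=> sEM; rewrite -(subfield_closed M) agenvS //; apply/subv_sumP. Qed.

Lemma compositum2Sl E F : (E <= compositum2 E F)%VS.
Proof. exact: subv_trans (addvSl _ _) (sub_agenv _). Qed.

Lemma compositum2Sr E F : (F <= compositum2 E F)%VS.
Proof. exact: subv_trans (addvSr _ _) (sub_agenv _). Qed.

Lemma compositum2_sub E F M :
  (E <= M)%VS -> (F <= M)%VS -> (compositum2 E F <= M)%VS.
Proof. by move=> sEM sFM; rewrite -(subfield_closed M) agenvS // subv_add sEM. Qed.

Lemma bigcap_gal_compositum (I : finType) (J : {set I}) (E : I -> {subfield L}) :
  (\bigcap_(l in J) 'Gal(compositum J E / E l) = 1)%g.
Proof.
set M := compositum J E; apply/trivgP/subsetP => x /bigcapP galEx; rewrite inE.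
apply/gal_eqP => a Ma; rewrite gal_id.
have : (M <= fixedField [set x])%VS.
  apply: compositum_sub => l lJ.
  by rewrite -galois_connection ?compositum_sup // sub1set galEx.
by move/subvP/(_ a Ma)/mem_fixedFieldP => [_ ->] //; apply: set11.
Qed.

Lemma galois_TI_sub_compositum2 M E F :
    galois 1 M -> (E <= M)%VS -> (F <= M)%VS ->
    ('Gal(M / E) :&: 'Gal(M / F) = 1)%g ->
  (M <= compositum2 E F)%VS.
Proof.
move=> galM sEM sFM tiEF; set C := compositum2 E F.
have galCM : galois C M by apply: galoisS galM; rewrite sub1v compositum2_sub.
have galC1 : ('Gal(M / C) = 1)%g.
  by apply/trivgP; rewrite -tiEF subsetI !galS ?compositum2Sl ?compositum2Sr.
rewrite -(galois_fixedField galCM) galC1; apply/subvP => a Ma.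
by apply/fixedFieldP => // x /set1P ->; apply: gal_id.
Qed.

Lemma cyclic_ext_sub E F : cyclic_ext E -> (F <= E)%VS -> cyclic_ext F.
Proof.
case/andP=> galE cycE sFE; have sub1FE : (1 <= F <= E)%VS by rewrite sub1v.
have nsGal : ('Gal(E / F) <| 'Gal(E / 1))%g.
  by rewrite -sub_abelian_normal ?cyclic_abelian ?galS ?sub1v.
have galF : galois 1 F.
  have := normal_fixedField_galois galE nsGal.
  by rewrite (galois_fixedField _) // (galoisS sub1FE galE).
have nF : normalField 1 F by case/and3P: galF.
rewrite /cyclic_ext galF -(isog_cyclic (normalField_isog galE sub1FE nF)).
exact: quotient_cyclic.
Qed.

Lemma gal_quotient_cyclic M E :
    galois 1 M -> (E <= M)%VS -> cyclic_ext E ->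
  [/\ 'Gal(M / E) <| 'Gal(M / 1), cyclic ('Gal(M / 1) / 'Gal(M / E))
    & #|'Gal(M / 1) / 'Gal(M / E)| = \dim E]%g.
Proof.
move=> galM sEM /andP[galE cycE]; have sub1EM : (1 <= E <= M)%VS by rewrite sub1v.
have nE : normalField 1 E by case/and3P: galE.
have isoQ := normalField_isog galM sub1EM nE.
rewrite normalField_normal // (isog_cyclic isoQ) (card_isog isoQ) -galois_dim //.
by split; rewrite // dimv1 divn1.
Qed.

End Compositum.

Theorem lemma4p4
  (k : fieldType) (hk : global_field k) (L : splittingFieldType k)
  (p : nat) (hp : prime p) (m : nat) (hm : (2 <= m)%N)
  (K : 'I_m.+1 -> {subfield L}) (eps : 'I_m.+1 -> nat)
  (hcyc : forall i, cyclic_ext (K i))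
  (hdeg : forall i, \dim (K i) = (p ^ eps i)%N)
  (heps : forall i, (eps ord0 <= eps i)%N)
  (hcap : (\bigcap_i (K i : {vspace L}))%VS = 1%VS)
  (hnsub : forall i j, i != j -> ~~ (K j <= K i)%VS)
  (d : nat) (hd : (0 < d)%N) (J : {set 'I_m.+1}) (hJ : J != set0)
  (Kd : 'I_m.+1 -> {subfield L})
  (hKd : forall i, i \in J ->
     [/\ (d <= eps i)%N, (Kd i <= K i)%VS & \dim (Kd i) = (p ^ d)%N])
  (hbic : bicyclic (compositum J Kd)) :
  forall i j, i \in J -> j \in J ->
    (forall i' j', i' \in J -> j' \in J ->
       (\dim (compositum2 (Kd i') (Kd j')) <= \dim (compositum2 (Kd i) (Kd j)))%N) ->
    compositum J Kd = compositum2 (Kd i) (Kd j).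
Proof.
move=> i j iJ jJ max_ij; set M := compositum J Kd.
have [galM [n1 [n2 [_ _ _ isoG]]]] := hbic.
have sKdM l : l \in J -> (Kd l <= M)%VS by apply: compositum_sup.
have quoH l : l \in J ->
    [/\ 'Gal(M / Kd l) <| 'Gal(M / 1), cyclic ('Gal(M / 1) / 'Gal(M / Kd l))
      & #|'Gal(M / 1) / 'Gal(M / Kd l)| = (p ^ d)%N]%g.
  move=> lJ; have [_ sKdK <-] := hKd l lJ.
  exact: gal_quotient_cyclic (sKdM l lJ) (cyclic_ext_sub (hcyc l) sKdK).
have cG : abelian 'Gal(M / 1) by rewrite (isog_abelian isoG) abelian_Zp_prod.
have rG : ('r('Gal(M / 1)) <= 2)%g by rewrite (isog_rank isoG) rank_Zp_prod.
have [i1 [j1 [i1J j1J tiH]]] := cyclic_quotients_TI_pair hp hd cG rG hJ quoH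
  (bigcap_gal_compositum J Kd).
have sMC := galois_TI_sub_compositum2 galM (sKdM _ i1J) (sKdM _ j1J) tiH.
apply/esym/val_inj/eqP; rewrite eqEdim compositum2_sub ?sKdM //=.
exact: leq_trans (dimvS sMC) (max_ij _ _ i1J j1J).
Qed.
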